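(* Let $f_1,f_2,g_1,g_2:\mathbb R^n\to\mathbb R$ be convex and positively one-homogeneous with $g_1(x)-g_2(x)\ge0$ for all $x$, and let $r(x)=\frac{f_1(x)-f_2(x)}{g_1(x)-g_2(x)}$. Consider the generalized RatioDCA iteration: start from $x_0$ with $\|x_0\|_2=1$, $\lambda_0=r(x_0)$; given $x_k$ and $\lambda_k=r(x_k)$: if $\lambda_k\ge0$, pick $F_2\in\partial f_2(x_k)$, $G_1\in\partial g_1(x_k)$ and let $x_{k+1}$ be a minimizer over $\{\xi:\|\xi\|_2\le1\}$ of $f_1(\xi)-\langle\xi,F_2\rangle+\lambda_k\big(g_2(\xi)-\langle\xi,G_1\rangle\big)$; if $\lambda_k<0$, pick $F_2\in\partial f_2(x_k)$, $G_2\in\partial g_2(x_k)$ and let $x_{k+1}$ be a minimizer over $\{\xi:\|\xi\|_2\le1\}$ of $g_1(\xi)-\langle\xi,G_2\rangle+\frac1{\lambda_k}\big(\langle\xi,F_2\rangle-f_1(\xi)\big)$; then set $\lambda_{k+1}=r(x_{k+1})$. Assume the iteration is well defined, i.e. $g_1(x_k)-g_2(x_k)>0$ for all $k$. Then for each $k$, either $\lambda_{k+1}<\lambda_k$, or $\lambda_{k+1}=\lambda_k$ (so the method terminates) and $\lambda_{k+1}$ is a nonlinear eigenvalue of $r$ with nonlinear eigenvector $x_{k+1}$.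
   Context: $\partial$ denotes the subdifferential of a convex function; $\langle\cdot,\cdot\rangle$ the Euclidean inner product. A real $\lambda$ is a nonlinear eigenvalue of $r$ with nonlinear eigenvector $x$ if $0\in\partial f_1(x)-\partial f_2(x)-\lambda\big(\partial g_1(x)-\partial g_2(x)\big)$ (Minkowski sums/differences of sets). The method is stopped when the relative change of $\lambda_k$ falls below a tolerance; in particular it terminates when $\lambda_{k+1}=\lambda_k$. *)

From mathcomp Require Import all_boot all_order all_algebra.
From mathcomp Require Import reals.
Set Implicit Arguments. Unset Strict Implicit. Unset Printing Implicit Defensive.
Import Order.TTheory GRing.Theory Num.Theory.
Local Open Scope ring_scope.

Section Defs.
Variables (R : realType) (n : nat).
Implicit Types (x y v : 'rV[R]_n) (f : 'rV[R]_n -> R).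

Definition dotv x y : R := \sum_(i < n) x 0 i * y 0 i.
Definition norm2 x : R := Num.sqrt (dotv x x).

Definition convex_fun f : Prop :=
  forall x y (t : R), 0 <= t -> t <= 1 ->
    f (t *: x + (1 - t) *: y) <= t * f x + (1 - t) * f y.

Definition pos_one_homogeneous f : Prop :=
  forall (t : R) x, 0 < t -> f (t *: x) = t * f x.

Definition subgrad f x v : Prop :=
  forall y, f x + dotv v (y - x) <= f y.

Definition dc_ratio (f1 f2 g1 g2 : 'rV[R]_n -> R) x : R :=
  (f1 x - f2 x) / (g1 x - g2 x).

Definition nonlin_eigen (f1 f2 g1 g2 : 'rV[R]_n -> R) (lam : R) x : Prop :=
  exists s1 s2 t1 t2,
    [/\ subgrad f1 x s1, subgrad f2 x s2, subgrad g1 x t1, subgrad g2 x t2 &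
        s1 - s2 - lam *: (t1 - t2) = 0].

Definition ball_minimizer (phi : 'rV[R]_n -> R) xi : Prop :=
  norm2 xi <= 1 /\ forall z, norm2 z <= 1 -> phi xi <= phi z.

End Defs.

From mathcomp Require Import all_boot all_order all_algebra.
From mathcomp Require Import classical_sets reals.
From mathcomp Require Import ring lra.
Import Order.TTheory GRing.Theory Num.Theory.
Local Open Scope ring_scope.

(* Positively homogeneous convex functions are sublinear, and their
   subgradients at x are exactly the linear minorants that are tight at x.
   Replacing f2 and the concave part of -lam_k (g1 - g2) by the linear
   minorants chosen at x_k gives a model that majorizes
   f1 - f2 - lam_k (g1 - g2), vanishes at x_k and is minimized over the unit
   ball by x_(k+1); hence lam_(k+1) <= lam_k.  If equality holds, the model is
   nonnegative on the ball, hence everywhere by homogeneity, and vanishes at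
   x_(k+1).  The linear minorants are then tight at x_(k+1), and a
   finite-dimensional Hahn-Banach sandwich splits the remaining linear
   minorant of f1 + |lam_k| h (h the convex part kept) into subgradients of
   f1 and h: this is the nonlinear eigenvalue condition. *)

Set Implicit Arguments.
Unset Strict Implicit.
Unset Printing Implicit Defensive.

Section Sublinear.
Variables (R : realType) (V : lmodType R).
Implicit Types (P Q : V -> R) (y z e : V).

Definition sublinear P : Prop :=
  (forall (c : R) y, 0 < c -> P (c *: y) <= c * P y) /\
  (forall y z, P (y + z) <= P y + P z).

Lemma sublinear0 P : sublinear P -> P 0 = 0.
Proof.
case=> sZ _; have := sZ 2 0 ltac:(lra); have := sZ 2^-1 0 ltac:(by rewrite invr_gt0).
by rewrite !scaler0; lra.
Qed.

Lemma sublinearZ P c y : sublinear P -> 0 < c -> P (c *: y) = c * P y.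
Proof.
move=> [sZ _] c_gt0; apply/eqP; rewrite eq_le sZ //=.
have := sZ c^-1 (c *: y) ltac:(by rewrite invr_gt0).
by rewrite scalerA mulVf ?gt_eqF // scale1r -ler_pdivlMl // mulrC.
Qed.

Lemma sublinearN P y : sublinear P -> - P (- y) <= P y.
Proof. by move=> sP; have := sP.2 y (- y); rewrite subrr sublinear0 //; lra. Qed.

Lemma sublinearZN P c e : sublinear P -> c < 0 -> P (c *: e) = - c * P (- e).
Proof.
by move=> sP c_lt0; rewrite -sublinearZ ?oppr_gt0 // scalerN scaleNr opprK.
Qed.

Lemma sublinear_scale_ge P c e : sublinear P -> c * P e <= P (c *: e).
Proof.
move=> sP; have := sublinearN e sP; case: (ltrgtP c 0) => [c_lt0|c_gt0|->] Ne.
- rewrite sublinearZN //; nra.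
- by rewrite sublinearZ.
- by rewrite scale0r sublinear0 // mul0r.
Qed.

Lemma sublinear_lineZ P c e : sublinear P -> P e + P (- e) <= 0 ->
  P (c *: e) = c * P e.
Proof.
move=> sP Pe; apply/eqP; rewrite eq_le sublinear_scale_ge // andbT.
case: (ltrgtP c 0) => [c_lt0|c_gt0|->].
- rewrite sublinearZN //; nra.
- by rewrite sublinearZ.
- by rewrite scale0r sublinear0 // mul0r.
Qed.

Lemma sublinearB_linear P (l : V -> R) : sublinear P ->
  (forall (c : R) y, l (c *: y) = c * l y) -> (forall y z, l (y + z) = l y + l z) ->
  sublinear (fun y => P y - l y).
Proof.
move=> [sZ sD] lZ lD; split=> [c y c_gt0|y z]; last by rewrite lD; have := sD y z; lra.
by rewrite lZ mulrBr; have := sZ c y c_gt0; lra.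
Qed.

Lemma sublinear_scale P (a : R) : sublinear P -> 0 <= a -> sublinear (fun y => a * P y).
Proof.
move=> [sZ sD] a_ge0; split=> [c y c_gt0|y z].
  by rewrite mulrCA ler_wpM2l ?sZ.
by rewrite -mulrDr ler_wpM2l ?sD.
Qed.

End Sublinear.

Section InfimalConvolution.
Variables (R : realType) (I V : lmodType R) (P : V -> R) (w : I -> R) (v : I -> V).
Hypotheses (sP : sublinear P) (sw : sublinear w).
Hypotheses (vZ : forall (c : R) i, v (c *: i) = c *: v i).
Hypothesis vD : forall i j, v (i + j) = v i + v j.
Hypothesis Pvw_ge0 : forall i, 0 <= P (v i) + w i.

Definition infconv y := inf (range (fun i => P (y + v i) + w i)).

Lemma infconv_le y i : infconv y <= P (y + v i) + w i.
Proof.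
apply: ge_inf; last by exists i.
exists (- P (- y)) => _ [j _ <-]; have := sP.2 (y + v j) (- y).
by rewrite addrC addKr; have := Pvw_ge0 j; lra.
Qed.

Lemma infconv_ge y m : (forall i, m <= P (y + v i) + w i) -> m <= infconv y.
Proof.
by move=> le_m; apply: lb_le_inf => [|_ [i _ <-]]; [exists (P (y + v 0) + w 0), 0|].
Qed.

Lemma infconv_sublinear : sublinear infconv.
Proof.
split=> [c y c_gt0|y z].
  rewrite mulrC -ler_pdivrMr //; apply: infconv_ge => i.
  rewrite ler_pdivrMr // mulrC; have := infconv_le (c *: y) (c *: i).
  by rewrite vZ -scalerDr (sublinearZ _ sP) ?(sublinearZ _ sw) // -mulrDr.
have le_sum i j : infconv (y + z) <= (P (y + v i) + w i) + (P (z + v j) + w j).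
  have := infconv_le (y + z) (i + j); rewrite vD addrACA.
  by have := sP.2 (y + v i) (z + v j); have := sw.2 i j; lra.
suff : infconv (y + z) - infconv z <= infconv y by lra.
apply: infconv_ge => i; suff : infconv (y + z) - (P (y + v i) + w i) <= infconv z by lra.
by apply: infconv_ge => j; have := le_sum i j; lra.
Qed.

Lemma infconv_le_self y : infconv y <= P y.
Proof.
have v0 : v 0 = 0 by rewrite -(scale0r (0 : I)) vZ scale0r.
by have := infconv_le y 0; rewrite v0 addr0 sublinear0 // addr0.
Qed.

Lemma infconv_le_oppv i : infconv (- v i) <= w i.
Proof. by have := infconv_le (- v i) i; rewrite addNr sublinear0 // add0r. Qed.

End InfimalConvolution.

Section RowVectors.
Variables (R : realType) (n : nat).
Implicit Types (x y z s c e : 'rV[R]_n) (f P Q : 'rV[R]_n -> R).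

Lemma dotvC x y : dotv x y = dotv y x.
Proof. by apply: eq_bigr => i _; rewrite mulrC. Qed.

Lemma dotvDr x y z : dotv x (y + z) = dotv x y + dotv x z.
Proof. by rewrite /dotv -big_split; apply: eq_bigr => i _; rewrite mxE mulrDr. Qed.

Lemma dotvZr x y (a : R) : dotv x (a *: y) = a * dotv x y.
Proof. by rewrite /dotv mulr_sumr; apply: eq_bigr => i _; rewrite mxE mulrCA. Qed.

Lemma dotvNr x y : dotv x (- y) = - dotv x y.
Proof. by rewrite -scaleN1r dotvZr mulN1r. Qed.

Lemma dotvDl x y z : dotv (x + y) z = dotv x z + dotv y z.
Proof. by rewrite !(dotvC _ z) dotvDr. Qed.

Lemma dotvZl x y (a : R) : dotv (a *: x) y = a * dotv x y.
Proof. by rewrite !(dotvC _ y) dotvZr. Qed.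

Lemma subgrad_sublinearP f x s : sublinear f ->
  subgrad f x s <-> (forall y, dotv s y <= f y) /\ dotv s x = f x.
Proof.
move=> sf; split=> [s_sub|[s_le s_x] y]; last by rewrite dotvDr dotvNr s_x addrC subrK.
have := s_sub 0; have := s_sub (2 *: x); rewrite sublinear0 // sublinearZ ?ltr0Sn //.
rewrite add0r !dotvDr dotvZr !dotvNr => le2 le0.
have s_x : dotv s x = f x by lra.
by split=> // y; have := s_sub y; rewrite dotvDr dotvNr; lra.
Qed.

Lemma sublinear_sum P (I : Type) (r : seq I) (F : I -> 'rV[R]_n) : sublinear P ->
  P (\sum_(i <- r) F i) <= \sum_(i <- r) P (F i).
Proof.
move=> sP; elim/big_rec2: _ => [|i y a _ le_ya]; first by rewrite sublinear0.
by apply: le_trans (sP.2 _ _) _; rewrite lerD2l.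
Qed.

(* The witness is the infimal convolution of [P] with the linear function
   [t *: e |-> t * P e] on the line through [e]. *)
Lemma sublinear_flatten P e : sublinear P ->
  exists Q, [/\ sublinear Q, forall y, Q y <= P y & Q (- e) <= - P e].
Proof.
move=> sP; pose w (t : R^o) := - (t * P e).
have sw : sublinear w.
  by split=> [c t _|t u]; rewrite /w; [rewrite mulrN -mulrA | rewrite mulrDl; lra].
have vZ (c t : R^o) : (c *: t) *: e = c *: (t *: e) by rewrite scalerA.
have vD (t u : R^o) : (t + u) *: e = t *: e + u *: e by rewrite scalerDl.
have Pvw_ge0 (t : R^o) : 0 <= P (t *: e) + w t.
  by rewrite subr_ge0; apply: sublinear_scale_ge.
exists (infconv P w ( *:%R^~ e)); split.
- exact: infconv_sublinear.
- exact: infconv_le_self.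
- by have := infconv_le_oppv sP Pvw_ge0 (1 : R^o); rewrite scale1r /w mul1r.
Qed.

Lemma sublinear_flatten_seq P (es : seq 'rV[R]_n) : sublinear P ->
  exists Q, [/\ sublinear Q, forall y, Q y <= P y &
                 forall e, e \in es -> Q e + Q (- e) <= 0].
Proof.
move=> sP; elim: es => [|e es [Q [sQ le_QP Q_flat]]].
  by exists P; split.
have [Q' [sQ' le_Q'Q Q'_e]] := sublinear_flatten e sQ.
exists Q'; split=> [//|y|e']; first exact: le_trans (le_Q'Q y) (le_QP y).
rewrite inE => /orP[/eqP->|e'_es]; first by have := le_Q'Q e; lra.
by apply: le_trans (Q_flat e' e'_es); apply: lerD.
Qed.

Lemma sublinear_linear_minorant P : sublinear P ->
  exists s, forall y, dotv s y <= P y.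
Proof.
move=> sP; have [Q [sQ le_QP Q_flat]] :=
  sublinear_flatten_seq [seq delta_mx 0 i | i : 'I_n] sP.
exists (\row_i Q (delta_mx 0 i)).
have le_Q y : Q y <= dotv (\row_i Q (delta_mx 0 i)) y.
  suff <- : \sum_i Q (y 0 i *: delta_mx 0 i) = dotv (\row_i Q (delta_mx 0 i)) y.
    by rewrite {1}(row_sum_delta y); exact: sublinear_sum.
  by apply: eq_bigr => i _; rewrite mxE mulrC sublinear_lineZ // Q_flat // map_f ?mem_enum.
move=> y; have := le_Q (- y); rewrite dotvNr.
by have := sublinearN y sQ; have := le_QP y; lra.
Qed.

Lemma sublinear_subgrad P x : sublinear P -> exists s, subgrad P x s.
Proof.
move=> sP; have [Q [sQ le_QP Qx]] := sublinear_flatten x sP.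
have [s le_sQ] := sublinear_linear_minorant sQ.
have le_sP y : dotv s y <= P y := le_trans (le_sQ y) (le_QP y).
exists s; apply/subgrad_sublinearP => //; split=> //.
by have := le_sP x; have := le_sQ (- x); rewrite dotvNr; lra.
Qed.

Lemma sublinear_sandwich p h : sublinear p -> sublinear h -> (forall y, 0 <= p y + h y) ->
  exists s, forall y, - h y <= dotv s y <= p y.
Proof.
move=> sp sh ph_ge0.
pose Q := infconv p h (@id 'rV[R]_n).
have sQ : sublinear Q by exact: infconv_sublinear.
have le_Qp y : Q y <= p y by exact: infconv_le_self.
have le_Qh y : Q (- y) <= h y by exact: infconv_le_oppv.
have [s le_sQ] := sublinear_linear_minorant sQ.
exists s => y; rewrite (le_trans (le_sQ y)) // andbT.
by have := le_sQ (- y); have := le_Qh y; rewrite dotvNr; lra.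
Qed.

Lemma subgrad_sum p q (a : R) c x : sublinear p -> sublinear q -> 0 < a ->
  (forall y, dotv c y <= p y + a * q y) -> dotv c x = p x + a * q x ->
  exists s t, [/\ subgrad p x s, subgrad q x t & s + a *: t = c].
Proof.
move=> sp sq a_gt0 c_le c_x.
have sp' : sublinear (fun y => p y - dotv c y).
  by apply: sublinearB_linear => // [k y|y z]; rewrite (dotvZr, dotvDr).
have [u u_between] := sublinear_sandwich sp' (sublinear_scale sq (ltW a_gt0))
  ltac:(by move=> y; have := c_le y; lra).
have u_x : dotv u x = - (a * q x) by have /andP[] := u_between x; lra.
exists (c + u), (- a^-1 *: u); split.
- apply/subgrad_sublinearP => //; rewrite !dotvDl u_x; split; last lra.
  by move=> y; have /andP[_ u_le] := u_between y; rewrite dotvDl; lra.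
- apply/subgrad_sublinearP => //; rewrite !dotvZl u_x; split; last first.
    by rewrite mulrN mulNr opprK mulrA mulVf ?mul1r ?gt_eqF.
  move=> y; have /andP[u_ge _] := u_between y.
  rewrite dotvZl mulNr -mulrN ler_pdivrMl // mulrC; lra.
- by rewrite scalerA mulrN mulrV ?unitfE ?gt_eqF // scaleN1r addrK.
Qed.

Lemma convex_homogeneous_sublinear f :
  convex_fun f -> pos_one_homogeneous f -> sublinear f.
Proof.
move=> cf hf; split=> [c y c_gt0|y z]; first by rewrite hf.
have half_ge0 : (0 : R) <= 2^-1 by rewrite invr_ge0 ler0n.
have half_le1 : (2^-1 : R) <= 1 by rewrite invf_le1 ?ler1n.
have := cf y z _ half_ge0 half_le1.
have -> : (1 - 2^-1 : R) = 2^-1 by field.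
by rewrite -scalerDr -mulrDr hf ?ler_pM2l ?invr_gt0 ?ltr0Sn.
Qed.

Lemma norm2Z (a : R) y : 0 <= a -> norm2 (a *: y) = a * norm2 y.
Proof.
move=> a_ge0; rewrite /norm2 dotvZl dotvZr mulrA -expr2 sqrtrM ?sqr_ge0 //.
by rewrite sqrtr_sqr ger0_norm.
Qed.

Lemma homogeneous_ge0 f : pos_one_homogeneous f ->
  (forall z, norm2 z <= 1 -> 0 <= f z) -> forall y, 0 <= f y.
Proof.
move=> hf ball_ge0 y; have norm_ge0 : 0 <= norm2 y by exact: sqrtr_ge0.
have c_gt0 : 0 < (norm2 y + 1)^-1 by rewrite invr_gt0; lra.
rewrite -(pmulr_rge0 _ c_gt0) -hf //; apply: ball_ge0.
by rewrite norm2Z ?ler_pdivrMl ?(ltW c_gt0); lra.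
Qed.

Lemma ball_minimizerZ phi psi (a : R) x : 0 < a -> (forall y, psi y = a * phi y) ->
  ball_minimizer phi x -> ball_minimizer psi x.
Proof.
move=> a_gt0 psiE [x_ball x_min]; split=> // z z_ball.
by rewrite !psiE ler_pM2l // x_min.
Qed.

End RowVectors.

Section LinearizedModel.
Variables (R : realType) (n : nat) (f1 f2 h1 h2 : 'rV[R]_n -> R) (a : R).
Variables (F G x0 x1 : 'rV[R]_n).
Hypotheses (sf1 : sublinear f1) (sf2 : sublinear f2).
Hypotheses (sh1 : sublinear h1) (sh2 : sublinear h2) (a_ge0 : 0 <= a).

(* For [lam >= 0] the paper's subproblem is [dc_model] with
   [(h1, h2, a) = (g1, g2, lam)]; for [lam < 0] it is [dc_model] with
   [(h1, h2, a) = (g2, g1, - lam)], divided by [- lam]. *)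
Definition dc_model xi := f1 xi - dotv xi F + a * (h2 xi - dotv xi G).
Definition dc_gap y := f1 y - f2 y + a * (h2 y - h1 y).

Hypotheses (F_sub : subgrad f2 x0 F) (G_sub : subgrad h1 x0 G).
Hypotheses (x0_ball : norm2 x0 <= 1) (x1_min : ball_minimizer dc_model x1).
Hypothesis gap_x0 : dc_gap x0 = 0.

Let F_le y : dotv F y <= f2 y := ((subgrad_sublinearP _ _ sf2).1 F_sub).1 y.
Let G_le y : dotv G y <= h1 y := ((subgrad_sublinearP _ _ sh1).1 G_sub).1 y.

Lemma dc_model_sub_gap y :
  dc_model y - dc_gap y = (f2 y - dotv F y) + a * (h1 y - dotv G y).
Proof. by rewrite /dc_model /dc_gap !(dotvC y); ring. Qed.

Lemma dc_gap_le_model y : dc_gap y <= dc_model y.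
Proof.
rewrite -subr_ge0 dc_model_sub_gap addr_ge0 ?mulr_ge0 //.
  by rewrite subr_ge0 F_le.
by rewrite subr_ge0 G_le.
Qed.

Lemma dc_model_x1_le0 : dc_model x1 <= 0.
Proof.
have model_x0 : dc_model x0 = 0.
  apply/eqP; rewrite -gap_x0 -subr_eq0 dc_model_sub_gap.
  have [_ <-] := (subgrad_sublinearP _ _ sf2).1 F_sub.
  by have [_ <-] := (subgrad_sublinearP _ _ sh1).1 G_sub; rewrite !subrr mulr0 addr0.
by rewrite -model_x0; apply: x1_min.2.
Qed.

Lemma dc_model_descent : dc_gap x1 <= 0.
Proof. exact: le_trans (dc_gap_le_model x1) dc_model_x1_le0. Qed.

Lemma dc_model_ge0 y : dc_gap x1 = 0 -> 0 <= dc_model y.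
Proof.
move=> gap_x1; have model_x1 : dc_model x1 = 0.
  by apply/eqP; rewrite eq_le dc_model_x1_le0 -gap_x1 dc_gap_le_model.
apply: homogeneous_ge0 => [c z c_gt0|z z_ball]; last by rewrite -model_x1 x1_min.2.
by rewrite /dc_model !sublinearZ // !dotvZl; ring.
Qed.

Lemma dc_model_tight : dc_gap x1 = 0 ->
  subgrad f2 x1 F /\ a * (h1 x1 - dotv G x1) = 0.
Proof.
move=> gap_x1; have F_le_x1 : 0 <= f2 x1 - dotv F x1 by rewrite subr_ge0 F_le.
have G_le_x1 : 0 <= a * (h1 x1 - dotv G x1) by rewrite mulr_ge0 ?subr_ge0 ?G_le.
have : dc_model x1 - dc_gap x1 <= 0 by rewrite gap_x1 subr0 dc_model_x1_le0.
rewrite dc_model_sub_gap => sum_le0.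
split; last lra.
by apply/subgrad_sublinearP => //; split; [exact: F_le | lra].
Qed.

Lemma dc_model_stationary : dc_gap x1 = 0 ->
  exists s1 s2 t1 t2, [/\ subgrad f1 x1 s1, subgrad f2 x1 s2, subgrad h1 x1 t1,
                          subgrad h2 x1 t2 & s1 - s2 + a *: (t2 - t1) = 0].
Proof.
move=> gap_x1; have model_ge0 := dc_model_ge0 _ gap_x1.
have [F_sub1 aG_x1] := dc_model_tight gap_x1.
have [_ F_x1] := (subgrad_sublinearP _ _ sf2).1 F_sub1.
have [a0|a_neq0] := eqVneq a 0.
  have [t1 t1_sub] := sublinear_subgrad x1 sh1; have [t2 t2_sub] := sublinear_subgrad x1 sh2.
  exists F, F, t1, t2; split=> //; last by rewrite a0 scale0r subrr addr0.
  apply/subgrad_sublinearP => //; split=> [y|].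
    by have := model_ge0 y; rewrite /dc_model a0 mul0r addr0 dotvC; lra.
  by have := gap_x1; rewrite /dc_gap a0 mul0r addr0; lra.
have a_gt0 : 0 < a by rewrite lt_def a_neq0.
have G_sub1 : subgrad h1 x1 G.
  apply/subgrad_sublinearP => //; split; first exact: G_le.
  by move/eqP: aG_x1; rewrite mulf_eq0 (negPf a_neq0) subr_eq0 => /eqP ->.
have c_le y : dotv (F + a *: G) y <= f1 y + a * h2 y.
  by have := model_ge0 y; rewrite /dc_model dotvDl dotvZl !(dotvC y); lra.
have c_x1 : dotv (F + a *: G) x1 = f1 x1 + a * h2 x1.
  by have := gap_x1; rewrite /dc_gap dotvDl dotvZl; lra.
have [s1 [t2 [s1_sub t2_sub s1t2E]]] := subgrad_sum sf1 sh2 a_gt0 c_le c_x1.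
exists s1, F, G, t2; split=> //.
by rewrite scalerBr addrACA s1t2E -opprD subrr.
Qed.

End LinearizedModel.

Section RatioDCA.
Variables (R : realType) (n : nat) (f1 f2 g1 g2 : 'rV[R]_n -> R).
Hypotheses (sf1 : sublinear f1) (sf2 : sublinear f2).
Hypotheses (sg1 : sublinear g1) (sg2 : sublinear g2).
Implicit Types (lam : R) (x xk F G : 'rV[R]_n).

Definition dc_residual lam x := f1 x - f2 x - lam * (g1 x - g2 x).

Lemma dc_residual_ratio x : g1 x - g2 x != 0 ->
  dc_residual (dc_ratio f1 f2 g1 g2 x) x = 0.
Proof. by move=> D_neq0; rewrite /dc_residual /dc_ratio divfK // subrr. Qed.

Lemma ratiodca_step_nonneg lam xk x F G : 0 <= lam -> norm2 xk <= 1 ->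
  dc_residual lam xk = 0 -> subgrad f2 xk F -> subgrad g1 xk G ->
  ball_minimizer (fun xi => f1 xi - dotv xi F + lam * (g2 xi - dotv xi G)) x ->
  dc_residual lam x <= 0 /\ (dc_residual lam x = 0 -> nonlin_eigen f1 f2 g1 g2 lam x).
Proof.
move=> lam_ge0 xk_ball res_xk F_sub G_sub x_min.
have gapE y : dc_gap f1 f2 g1 g2 lam y = dc_residual lam y.
  by rewrite /dc_gap /dc_residual; ring.
have gap_xk : dc_gap f1 f2 g1 g2 lam xk = 0 by rewrite gapE.
split=> [|res_x]; first by rewrite -gapE (dc_model_descent sf2 sg1 lam_ge0 F_sub G_sub).
have [s1 [s2 [t1 [t2 [s1_sub s2_sub t1_sub t2_sub eq0]]]]] :=
  dc_model_stationary sf1 sf2 sg1 sg2 lam_ge0 F_sub G_sub xk_ball x_min gap_xk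
    ltac:(by rewrite gapE).
by exists s1, s2, t1, t2; split=> //; rewrite -scalerN opprB.
Qed.

Lemma ratiodca_step_neg lam xk x F G : lam < 0 -> norm2 xk <= 1 ->
  dc_residual lam xk = 0 -> subgrad f2 xk F -> subgrad g2 xk G ->
  ball_minimizer (fun xi => g1 xi - dotv xi G + lam^-1 * (dotv xi F - f1 xi)) x ->
  dc_residual lam x <= 0 /\ (dc_residual lam x = 0 -> nonlin_eigen f1 f2 g1 g2 lam x).
Proof.
move=> lam_lt0 xk_ball res_xk F_sub G_sub x_min.
have a_ge0 : 0 <= - lam by rewrite oppr_ge0 ltW.
have gapE y : dc_gap f1 f2 g2 g1 (- lam) y = dc_residual lam y.
  by rewrite /dc_gap /dc_residual; ring.
have gap_xk : dc_gap f1 f2 g2 g1 (- lam) xk = 0 by rewrite gapE.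
have model_min : ball_minimizer (dc_model f1 g1 (- lam) F G) x.
  apply: (ball_minimizerZ (a := - lam)) x_min; first by rewrite oppr_gt0.
  by move=> y; rewrite /dc_model; field; rewrite lt_eqF.
split=> [|res_x]; first by rewrite -gapE (dc_model_descent sf2 sg2 a_ge0 F_sub G_sub).
have [s1 [s2 [t1 [t2 [s1_sub s2_sub t1_sub t2_sub eq0]]]]] :=
  dc_model_stationary sf1 sf2 sg2 sg1 a_ge0 F_sub G_sub xk_ball model_min gap_xk
    ltac:(by rewrite gapE).
by exists s1, s2, t2, t1; split=> //; rewrite -scaleNr.
Qed.

Lemma dc_ratio_descent_or_eigen lam x : 0 < g1 x - g2 x ->
  dc_residual lam x <= 0 /\ (dc_residual lam x = 0 -> nonlin_eigen f1 f2 g1 g2 lam x) ->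
  dc_ratio f1 f2 g1 g2 x < lam \/
  dc_ratio f1 f2 g1 g2 x = lam /\
    nonlin_eigen f1 f2 g1 g2 (dc_ratio f1 f2 g1 g2 x) x.
Proof.
move=> D_gt0 [res_le0 res_eigen].
have resE : dc_residual lam x = (dc_ratio f1 f2 g1 g2 x - lam) * (g1 x - g2 x).
  rewrite -[LHS]subr0 -(dc_residual_ratio (lt0r_neq0 D_gt0)) /dc_residual; ring.
move: res_le0 res_eigen; rewrite resE pmulr_lle0 // subr_le0 le_eqVlt.
case/orP=> [/eqP ratio_eq|]; last by left.
by rewrite ratio_eq subrr mul0r => /(_ erefl) eigen; right.
Qed.

End RatioDCA.

Unset Implicit Arguments.

Theorem theorem4p1 (R : realType) (n : nat)
  (f1 f2 g1 g2 : 'rV[R]_n -> R)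
  (x : nat -> 'rV[R]_n) (F2 G : nat -> 'rV[R]_n) :
  convex_fun f1 -> convex_fun f2 -> convex_fun g1 -> convex_fun g2 ->
  pos_one_homogeneous f1 -> pos_one_homogeneous f2 ->
  pos_one_homogeneous g1 -> pos_one_homogeneous g2 ->
  (forall y, 0 <= g1 y - g2 y) ->
  norm2 (x 0%N) = 1 ->
  (forall k, 0 < g1 (x k) - g2 (x k)) ->
  (forall k, subgrad f2 (x k) (F2 k)) ->
  (forall k, 0 <= dc_ratio f1 f2 g1 g2 (x k) ->
     subgrad g1 (x k) (G k) /\
     ball_minimizer (fun xi => f1 xi - dotv xi (F2 k)
                               + dc_ratio f1 f2 g1 g2 (x k) * (g2 xi - dotv xi (G k)))
                    (x k.+1)) ->
  (forall k, dc_ratio f1 f2 g1 g2 (x k) < 0 ->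
     subgrad g2 (x k) (G k) /\
     ball_minimizer (fun xi => g1 xi - dotv xi (G k)
                               + (dc_ratio f1 f2 g1 g2 (x k))^-1 * (dotv xi (F2 k) - f1 xi))
                    (x k.+1)) ->
  forall k,
    dc_ratio f1 f2 g1 g2 (x k.+1) < dc_ratio f1 f2 g1 g2 (x k) \/
    (dc_ratio f1 f2 g1 g2 (x k.+1) = dc_ratio f1 f2 g1 g2 (x k) /\
     nonlin_eigen f1 f2 g1 g2 (dc_ratio f1 f2 g1 g2 (x k.+1)) (x k.+1)).
Proof.
move=> cf1 cf2 cg1 cg2 hf1 hf2 hg1 hg2 _ x0_unit D_gt0 F2_sub step_nonneg step_neg k.
have sf1 := convex_homogeneous_sublinear cf1 hf1.
have sf2 := convex_homogeneous_sublinear cf2 hf2.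
have sg1 := convex_homogeneous_sublinear cg1 hg1.
have sg2 := convex_homogeneous_sublinear cg2 hg2.
have x_ball j : norm2 (x j) <= 1.
  case: j => [|j]; first by rewrite x0_unit.
  by case: (lerP 0 (dc_ratio f1 f2 g1 g2 (x j))) => [/step_nonneg|/step_neg] [_ []].
have res_xk := dc_residual_ratio f1 f2 (lt0r_neq0 (D_gt0 k)).
apply: dc_ratio_descent_or_eigen (D_gt0 k.+1) _.
case: (lerP 0 (dc_ratio f1 f2 g1 g2 (x k))) => [lam_ge0|lam_lt0].
- have [G_sub x_min] := step_nonneg k lam_ge0.
  exact: (ratiodca_step_nonneg sf1 sf2 sg1 sg2 lam_ge0 (x_ball k) res_xk (F2_sub k)
            G_sub x_min).
- have [G_sub x_min] := step_neg k lam_lt0.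
  exact: (ratiodca_step_neg sf1 sf2 sg1 sg2 lam_lt0 (x_ball k) res_xk (F2_sub k)
            G_sub x_min).
Qed.
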